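(* Let $P\in\mathbb{R}^{p_1\times q_1}_+$, $Q\in\mathbb{R}^{p_2\times q_1}_+$, $R\in\mathbb{R}^{p_2\times q_2}_+$ be nonnegative matrices and let \[ M=\begin{bmatrix} P & 0\\ Q & R\end{bmatrix}\in\mathbb{R}^{(p_1+p_2)\times(q_1+q_2)}_+. \] Then $\operatorname{rank}_{\mathrm{psd}}(M)\ge\operatorname{rank}_{\mathrm{psd}}(P)+\operatorname{rank}_{\mathrm{psd}}(R)$. Moreover, if $Q=0$ then equality holds.
   Context: $\mathcal{S}^k_+$ denotes the cone of $k\times k$ real symmetric positive semidefinite matrices, with inner product $\langle A,B\rangle = \operatorname{trace}(AB)$. A psd factorization of size $k$ of a nonnegative matrix $M\in\mathbb{R}^{p\times q}_+$ is a collection $A_1,\dots,A_p, B_1,\dots,B_q \in \mathcal{S}^k_+$ with $M_{ij} = \langle A_i, B_j\rangle$ for all $i,j$; the psd rank $\operatorname{rank}_{\mathrm{psd}}(M)$ is the smallest $k$ for which such a factorization exists. *)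

From HB Require Import structures.
From mathcomp Require Import all_boot all_order all_algebra.
Set Implicit Arguments. Unset Strict Implicit. Unset Printing Implicit Defensive.
Import Order.TTheory GRing.Theory Num.Theory.
Local Open Scope ring_scope.

Definition psd (R : rcfType) (k : nat) (A : 'M[R]_k) : Prop :=
  A^T = A /\ forall x : 'cV[R]_k, 0 <= (x^T *m A *m x) 0 0.

Definition nonneg_mx (R : rcfType) (p q : nat) (M : 'M[R]_(p, q)) : Prop :=
  forall i j, 0 <= M i j.

Definition has_psd_fact (R : rcfType) (p q : nat) (M : 'M[R]_(p, q)) (k : nat) : Prop :=
  exists (A : 'I_p -> 'M[R]_k) (B : 'I_q -> 'M[R]_k),
    (forall i, psd (A i)) /\ (forall j, psd (B j)) /\
    (forall i j, M i j = \tr (A i *m B j)).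

Definition is_psd_rank (R : rcfType) (p q : nat) (M : 'M[R]_(p, q)) (k : nat) : Prop :=
  has_psd_fact M k /\ forall k', has_psd_fact M k' -> (k <= k')%N.

From HB Require Import structures.
From mathcomp Require Import all_boot all_order all_algebra.
From mathcomp Require Import ring lra zify.
Set Implicit Arguments. Unset Strict Implicit. Unset Printing Implicit Defensive.
Import Order.TTheory GRing.Theory Num.Theory.
Local Open Scope ring_scope.

(* Let [A_i], [B_j] be a psd factorization of size k of [[P, 0], [Q, R]].
   For a row i of P and a column j of R we have tr (A_i B_j) = 0, and since a
   psd matrix is a sum of rank-one terms w w^T (symmetric Gaussian
   elimination), this forces A_i B_j = 0.  So the row space U spanned by the
   A_i of the rows of P is orthogonal to the row space V spanned by the B_j of
   the columns of R, whence dim U + dim V <= k.  Compressing the factorization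
   onto U factors P with size dim U, and onto V factors R with size dim V.
   When Q = 0, block-diagonal factors give the reverse inequality. *)

Lemma mxrank_sumsmx_orth (K : fieldType) (I J : finType) k
    (U : I -> 'M[K]_k) (V : J -> 'M[K]_k) :
  (forall i j, U i *m (V j)^T = 0) ->
  (\rank (\sum_i U i)%MS + \rank (\sum_j V j)%MS <= k)%N.
Proof.
move=> UV0; set SU := (\sum_i U i)%MS; set SV := (\sum_j V j)%MS.
have SU_ker : (SU <= kermx SV^T)%MS.
  apply/sumsmx_subP => i _; apply/sub_kermxP; apply: trmx_inj.
  rewrite trmx_mul trmxK trmx0; apply/sub_kermxP/sumsmx_subP => j _.
  by apply/sub_kermxP; rewrite -[V j]trmxK -trmx_mul UV0 trmx0.
have := mxrankS SU_ker; rewrite mxrank_ker mxrank_tr.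
have := rank_leq_col SV; lia.
Qed.

Section PsdMatrices.
Variable F : rcfType.

Definition bform k (A : 'M[F]_k) (x y : 'cV[F]_k) : F := (x^T *m A *m y) 0 0.

Lemma bform_sym k (A : 'M[F]_k) x y : A^T = A -> bform A x y = bform A y x.
Proof.
move=> symA; rewrite /bform -[in LHS](trmxK (x^T *m A *m y)) mxE.
by rewrite !trmx_mul trmxK symA mulmxA.
Qed.

Lemma bform_expand k (A : 'M[F]_k) x y t : A^T = A ->
  bform A (x + t *: y) (x + t *: y) =
  bform A x x + 2 * t * bform A x y + t ^+ 2 * bform A y y.
Proof.
move=> symA; have := bform_sym x y symA; rewrite /bform.
rewrite !linearD !linearZ /= !mulmxDl -!scalemxAl !mxE => ->.
ring.
Qed.

Lemma psd_bform_ge0 k (A : 'M[F]_k) x : psd A -> 0 <= bform A x x.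
Proof. by case=> _; apply. Qed.

Lemma psd_bform_eq0 k (A : 'M[F]_k) x : psd A -> bform A x x = 0 -> A *m x = 0.
Proof.
move=> [symA psdA] Ax0.
have orth y : bform A y x = 0.
  set b := bform A y x; set d := bform A y y.
  have lin_ge0 t : 0 <= d + 2 * t * b.
    have := psdA (y + t *: x).
    by rewrite -/(bform _ _ _) bform_expand // Ax0 mulr0 addr0.
  apply/eqP/negPn/negP => b_neq0.
  (* a linear function of t that stays nonnegative must be constant *)
  have := lin_ge0 (- (d + 1) / (2 * b)).
  have -> : 2 * (- (d + 1) / (2 * b)) * b = - (d + 1) by field; rewrite b_neq0.
  lra.
apply/matrixP => i j; rewrite (ord1 j) [RHS]mxE.
by have := orth (delta_mx i 0); rewrite /bform trmx_delta -mulmxA -rowE mxE.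
Qed.

Lemma psd_cauchy_schwarz k (A : 'M[F]_k) x e : psd A -> 0 < bform A e e ->
  bform A x e ^+ 2 <= bform A x x * bform A e e.
Proof.
move=> [symA psdA] e_pos.
set a := bform A x x; set b := bform A x e; set c := bform A e e.
have := psdA (x + (- b / c) *: e).
rewrite -/(bform _ _ _) bform_expand // -/a -/b -/c.
have -> : a + 2 * (- b / c) * b + (- b / c) ^+ 2 * c = (a * c - b ^+ 2) / c.
  by field; rewrite gt_eqF.
by rewrite pmulr_lge0 ?invr_gt0 // subr_ge0.
Qed.

Lemma psd_neq0_bform_gt0 k (B : 'M[F]_k) : psd B -> B != 0 ->
  exists e, 0 < bform B e e.
Proof.
move=> psdB B_neq0.
have : ~~ [forall j : 'I_k, B *m delta_mx j (0 : 'I_1) == 0].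
  apply: contra B_neq0 => /forallP Bcol0; apply/eqP/matrixP => i j.
  by have := Bcol0 j; rewrite -colE => /eqP/matrixP/(_ i 0); rewrite !mxE.
rewrite negb_forall => /existsP [j Bj_neq0]; exists (delta_mx j 0).
rewrite lt_def psd_bform_ge0 // andbT.
by apply: contra Bj_neq0 => /eqP/(psd_bform_eq0 psdB) ->.
Qed.

(* One step of symmetric Gaussian elimination: removing the rank-one piece
   [(B e)(B e)^T / e^T B e] leaves a psd matrix (by Cauchy-Schwarz) that
   kills [e], hence has smaller rank. *)
Definition deflate k (B : 'M[F]_k) e : 'M[F]_k :=
  B - (bform B e e)^-1 *: (B *m e *m (B *m e)^T).

Lemma deflate_ker k (B : 'M[F]_k) e : B^T = B -> 0 < bform B e e ->
  deflate B e *m e = 0.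
Proof.
move=> symB c_pos; rewrite mulmxBl -scalemxAl -[_ *m _ *m e]mulmxA.
have -> : (B *m e)^T *m e = (bform B e e)%:M by rewrite [LHS]mx11_scalar trmx_mul symB.
by rewrite mul_mx_scalar scalerA mulVf ?gt_eqF // scale1r subrr.
Qed.

Lemma bform_deflate k (B : 'M[F]_k) e x : B^T = B ->
  bform (deflate B e) x x = bform B x x - (bform B e e)^-1 * bform B x e ^+ 2.
Proof.
move=> symB; rewrite /bform /deflate mulmxBr mulmxBl -scalemxAr -scalemxAl.
have entryBZ (X Y : 'M[F]_1) a : (X - a *: Y) 0 0 = X 0 0 - a * Y 0 0.
  by rewrite !mxE.
have entryM (X Y : 'M[F]_1) : (X *m Y) 0 0 = X 0 0 * Y 0 0.
  by rewrite mxE big_ord1.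
rewrite entryBZ !mulmxA -[_ *m (B *m e)^T *m x]mulmxA entryM expr2.
by rewrite trmx_mul symB -/(bform B e x) (bform_sym _ _ symB).
Qed.

Lemma psd_deflate k (B : 'M[F]_k) e : psd B -> 0 < bform B e e ->
  psd (deflate B e).
Proof.
move=> psdB c_pos; have [symB _] := psdB.
split; first by rewrite linearB /= linearZ /= symB trmx_mul trmxK.
move=> x; rewrite -/(bform _ x x) bform_deflate // mulrC subr_ge0.
by rewrite ler_pdivrMr // psd_cauchy_schwarz.
Qed.

Lemma mxrank_deflate k (B : 'M[F]_k) e : B^T = B -> 0 < bform B e e ->
  (\rank (deflate B e) < \rank B)%N.
Proof.
move=> symB c_pos; apply: rank_ltmx; rewrite ltmxE; apply/andP; split.
  rewrite addmx_sub ?submx_refl // eqmx_opp scalemx_sub //.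
  by rewrite trmx_mul symB mulmxA submxMl.
apply/negP => /submxP [D defB].
have Be0 : B *m e = 0 by rewrite defB -mulmxA deflate_ker // mulmx0.
by move: c_pos; rewrite /bform -mulmxA Be0 mulmx0 mxE ltxx.
Qed.

Lemma psd_gram k (B : 'M[F]_k) : psd B ->
  exists ws : seq 'cV[F]_k, B = \sum_(w <- ws) w *m w^T.
Proof.
move: {2}(\rank B) (leqnn (\rank B)) => n; elim: n B => [|n IHn] B rankB psdB.
  by exists [::]; move: rankB; rewrite leqn0 mxrank_eq0 big_nil => /eqP.
have [->|B_neq0] := eqVneq B 0; first by exists [::]; rewrite big_nil.
have [e c_pos] := psd_neq0_bform_gt0 psdB B_neq0.
have [symB _] := psdB.
have [ws defB'] := IHn _ (leq_trans (mxrank_deflate symB c_pos) rankB)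
  (psd_deflate psdB c_pos).
exists ((Num.sqrt (bform B e e))^-1 *: (B *m e) :: ws); rewrite big_cons -defB'.
rewrite linearZ /= -scalemxAl -scalemxAr scalerA -expr2 exprVn sqr_sqrtr ?ltW //.
by rewrite addrC subrK.
Qed.

Lemma psd_mxtrace_mul_eq0 k (A B : 'M[F]_k) : psd A -> psd B ->
  \tr (A *m B) = 0 -> A *m B = 0.
Proof.
move=> psdA /psd_gram [ws ->]; rewrite mulmx_sumr raddf_sum.
have tr_rank1 w : \tr (A *m (w *m w^T)) = bform A w w.
  by rewrite mulmxA mxtrace_mulC mulmxA /mxtrace big_ord1.
rewrite (eq_bigr _ (fun w _ => tr_rank1 w)).
move/eqP; rewrite psumr_eq0; last by move=> w _; apply: psd_bform_ge0.
move/allP => forms0; rewrite big_seq big1 // => w /forms0 /eqP.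
by rewrite mulmxA => /(psd_bform_eq0 psdA) ->; rewrite mul0mx.
Qed.

Lemma psd_congr k a (Z : 'M[F]_(a, k)) B : psd B -> psd (Z *m B *m Z^T).
Proof.
move=> [symB psdB]; split; first by rewrite !trmx_mul trmxK symB mulmxA.
by move=> y; have := psdB (Z^T *m y); rewrite trmx_mul trmxK !mulmxA.
Qed.

Lemma psd0 k : psd (0 : 'M[F]_k).
Proof. by split=> [|x]; rewrite ?trmx0 // mulmx0 mul0mx mxE. Qed.

Lemma psd_block_diag k1 k2 (X : 'M[F]_k1) (Y : 'M[F]_k2) :
  psd X -> psd Y -> psd (block_mx X 0 0 Y).
Proof.
move=> [symX psdX] [symY psdY]; split; first by rewrite tr_block_mx !trmx0 symX symY.
move=> x; rewrite -[x]vsubmxK tr_col_mx mul_row_block mul_row_col.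
by rewrite !mulmx0 addr0 add0r mxE addr_ge0.
Qed.

Lemma psd_row_compress k a (X : 'M[F]_(a, k)) L (A : 'M[F]_k) :
  X *m L = 1%:M -> (A <= X)%MS -> A^T = A -> A = X^T *m (L^T *m A *m L) *m X.
Proof.
move=> XL1 /submxP [D defA] symA.
have ALX : A *m L *m X = A by rewrite defA -(mulmxA D) XL1 mulmx1.
rewrite -!mulmxA (mulmxA A) ALX mulmxA -trmx_mul -{2}symA -trmx_mul mulmxA ALX.
by rewrite symA.
Qed.

Lemma has_psd_fact_compress p q k a (M : 'M[F]_(p, q))
    (A : 'I_p -> 'M[F]_k) (B : 'I_q -> 'M[F]_k) (X : 'M[F]_(a, k)) :
  (forall i, psd (A i)) -> (forall j, psd (B j)) ->
  (forall i j, M i j = \tr (A i *m B j)) ->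
  row_free X -> (forall i, (A i <= X)%MS) -> has_psd_fact M a.
Proof.
move=> psdA psdB defM /row_freeP [L XL1] AX.
exists (fun i => L^T *m A i *m L), (fun j => X *m B j *m X^T).
split; first by move=> i; have := psd_congr L^T (psdA i); rewrite trmxK.
split=> [j|i j]; first exact: psd_congr.
have [symA _] := psdA i.
by rewrite defM {1}(psd_row_compress XL1 (AX i) symA) -!mulmxA mxtrace_mulC !mulmxA.
Qed.

Lemma has_psd_fact_trmx p q k (M : 'M[F]_(p, q)) :
  has_psd_fact M k -> has_psd_fact M^T k.
Proof.
move=> [A [B [psdA [psdB defM]]]]; exists B, A; do 2!split=> //.
by move=> j i; rewrite mxE defM mxtrace_mulC.
Qed.

Lemma has_psd_fact_block_lower p1 p2 q1 q2 k (P : 'M[F]_(p1, q1))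
    (Q : 'M[F]_(p2, q1)) (R : 'M[F]_(p2, q2)) :
  has_psd_fact (block_mx P 0 Q R) k ->
  exists a b, [/\ (a + b <= k)%N, has_psd_fact P a & has_psd_fact R b].
Proof.
move=> [A [B [psdA [psdB defM]]]].
pose U i := A (lshift p2 i); pose V j := B (rshift q1 j).
have UV0 i j : U i *m (V j)^T = 0.
  have [symB _] := psdB (rshift q1 j).
  by rewrite symB (psd_mxtrace_mul_eq0 (psdA _) (psdB _)) // -defM block_mxEur mxE.
exists (\rank (\sum_i U i)%MS), (\rank (\sum_j V j)%MS).
split; first exact: mxrank_sumsmx_orth.
  apply: (has_psd_fact_compress (X := row_base (\sum_i U i)%MS)
           (fun i => psdA (lshift p2 i)) (fun j => psdB (lshift q2 j))).
  - by move=> i j; rewrite -defM block_mxEul.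
  - exact: row_base_free.
  - by move=> i; rewrite eq_row_base (sumsmx_sup i).
rewrite -[R]trmxK; apply: has_psd_fact_trmx.
apply: (has_psd_fact_compress (X := row_base (\sum_j V j)%MS)
         (fun j => psdB (rshift q1 j)) (fun i => psdA (rshift p1 i))).
- by move=> j i; rewrite mxE mxtrace_mulC -defM block_mxEdr.
- exact: row_base_free.
- by move=> j; rewrite eq_row_base (sumsmx_sup j).
Qed.

Lemma has_psd_fact_block_diag p1 p2 q1 q2 a b (P : 'M[F]_(p1, q1))
    (R : 'M[F]_(p2, q2)) :
  has_psd_fact P a -> has_psd_fact R b -> has_psd_fact (block_mx P 0 0 R) (a + b).
Proof.
move=> [A1 [B1 [psdA1 [psdB1 defP]]]] [A2 [B2 [psdA2 [psdB2 defR]]]].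
exists (fun i => match split i with
                 | inl i1 => block_mx (A1 i1) 0 0 (0 : 'M_b)
                 | inr i2 => block_mx (0 : 'M_a) 0 0 (A2 i2) end).
exists (fun j => match split j with
                 | inl j1 => block_mx (B1 j1) 0 0 (0 : 'M_b)
                 | inr j2 => block_mx (0 : 'M_a) 0 0 (B2 j2) end).
split=> [i|]; first by case: split => i'; apply: psd_block_diag => //; apply: psd0.
split=> [j|i j]; first by case: split => j'; apply: psd_block_diag => //; apply: psd0.
case: split_ordP => i' ->; case: split_ordP => j' ->;
  rewrite mulmx_block !mulmx0 !mul0mx ?addr0 ?add0r mxtrace_block ?mxtrace0 ?addr0 ?add0r.
- by rewrite block_mxEul defP.
- by rewrite block_mxEur mxE.
- by rewrite block_mxEdl mxE.
- by rewrite block_mxEdr defR.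
Qed.

End PsdMatrices.

Theorem theorem2p7 (F : rcfType) (p1 p2 q1 q2 : nat)
    (P : 'M[F]_(p1, q1)) (Q : 'M[F]_(p2, q1)) (R : 'M[F]_(p2, q2))
    (rP rR rM : nat) :
  nonneg_mx P -> nonneg_mx Q -> nonneg_mx R ->
  is_psd_rank P rP -> is_psd_rank R rR ->
  is_psd_rank (block_mx P 0 Q R) rM ->
  (rP + rR <= rM)%N /\ (Q = 0 -> rM = (rP + rR)%N).
Proof.
move=> _ _ _ [factP minP] [factR minR] [factM minM].
have lower : (rP + rR <= rM)%N.
  have [a [b [abM /minP Pa /minR Rb]]] := has_psd_fact_block_lower factM.
  lia.
split=> // Q0; apply/eqP; rewrite eqn_leq lower andbT.
by apply: minM; rewrite Q0; apply: has_psd_fact_block_diag.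
Qed.
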